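(* Let $n \ge 2$, $d \in \{1,\dots,n-1\}$, let $\triangle$ be a regular $n$-simplex in $\mathbb{R}^n$, and let $L = (n-d)(-\triangle)$. Then for every $(n-d)$-dimensional linear subspace $\xi$ of $\mathbb{R}^n$, $L_\xi$ contains a translate of $\triangle_\xi$; but for every $c$ with $0 < c < \tfrac{n}{n-d}$, the set $cL$ contains no translate of $\triangle$. (In particular, the constants $\tfrac{n}{n-1}$ in Theorem 5.1 and $\tfrac{n}{n-d}$ in Theorem 6.1 cannot be replaced by smaller constants.)
   Context: For a set $S\subseteq\mathbb{R}^n$ and a linear subspace $\xi$, $S_\xi$ denotes the orthogonal projection of $S$ onto $\xi$. ''$A$ contains a translate of $B$'' means $B + w \subseteq A$ for some vector $w$. For $c \in \mathbb{R}$, $cS = \{cx : x \in S\}$. *)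

From HB Require Import structures.
From mathcomp Require Import all_boot all_order all_algebra.
Set Implicit Arguments. Unset Strict Implicit. Unset Printing Implicit Defensive.
Import Order.TTheory GRing.Theory Num.Theory.
Local Open Scope ring_scope.

Definition dotv (R : rcfType) (n : nat) (x y : 'rV[R]_n) : R := (x *m y^T) 0 0.

Definition vset (R : rcfType) (n : nat) := 'rV[R]_n -> Prop.

Definition simplex_set (R : rcfType) (n : nat) (v : 'I_n.+1 -> 'rV[R]_n) : vset R n :=
  fun x => exists l : 'I_n.+1 -> R,
    (forall i, 0 <= l i) /\ \sum_i l i = 1 /\ x = \sum_i l i *: v i.

Definition regular_vertices (R : rcfType) (n : nat) (v : 'I_n.+1 -> 'rV[R]_n) : Prop :=
  exists s : R, 0 < s /\
    forall i j : 'I_n.+1, i != j -> dotv (v i - v j) (v i - v j) = s.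

Definition scale_set (R : rcfType) (n : nat) (c : R) (S : vset R n) : vset R n :=
  fun y => exists x, S x /\ y = c *: x.

Definition contains_translate (R : rcfType) (n : nat) (A B : vset R n) : Prop :=
  exists w : 'rV[R]_n, forall x, B x -> A (x + w).

(* The linear subspace xi is the row space of the matrix X.
   S_xi = orthogonal projection of S onto xi: p is the projection of x iff
   p ∈ xi and x - p ⟂ xi. *)
Definition proj_set (R : rcfType) (n : nat) (X : 'M[R]_n) (S : vset R n) : vset R n :=
  fun p => exists x, S x /\ (p <= X)%MS /\
    forall y : 'rV[R]_n, (y <= X)%MS -> dotv (x - p) y = 0.

From HB Require Import structures.
From mathcomp Require Import all_boot all_order all_algebra.
From mathcomp Require Import ring lra zify.
Import Order.TTheory GRing.Theory Num.Theory.
Local Open Scope ring_scope.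

(* Let T be a regular n-simplex with vertices v 0, ..., v n, k = n - d, and
   L = k (-T).

   We look for one translation w such that, for every vertex,
   the projection of v i + w onto xi (the row space of X, of dimension k)
   lies in the projection of -k T.  For each vertex these w form a convex set
   depending only on the projection onto xi, so by Helly's theorem in
   dimension k it suffices to treat k+1 vertices at a time; for a set S of at
   most k+1 vertices, w = -(sum of the vertices of S, padded with copies of
   v 0) works explicitly.  Averaging over the barycentric coordinates of a
   point of T then gives (T + w)_xi inside L_xi.

   If T + w lies in c L = -(c k) T, pair each translated vertex with
   the centred vertex u i = v i - centroid.  For a regular simplex the Gram
   matrix of the u i is rho on the diagonal and -rho/n off it, so every point
   of T has inner product at least -rho/n with u i; summing the resulting
   inequalities over i gives c k >= n. *)

Section InnerProduct.
Context {R : rcfType} {n : nat}.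
Implicit Types (x y z : 'rV[R]_n) (a : R).

Lemma dotvC x y : dotv x y = dotv y x.
Proof. by rewrite /dotv -[in LHS](trmxK x) -trmx_mul mxE. Qed.

Lemma dotvDl x y z : dotv (x + y) z = dotv x z + dotv y z.
Proof. by rewrite /dotv mulmxDl mxE. Qed.

Lemma dotvZl a x y : dotv (a *: x) y = a * dotv x y.
Proof. by rewrite /dotv -scalemxAl mxE. Qed.

Lemma dotvBl x y z : dotv (x - y) z = dotv x z - dotv y z.
Proof. by rewrite -scaleN1r dotvDl dotvZl mulN1r. Qed.

Lemma dotvBr x y z : dotv z (x - y) = dotv z x - dotv z y.
Proof. by rewrite !(dotvC z) dotvBl. Qed.

Lemma dotv_normB x y : dotv (x - y) (x - y) = dotv x x + dotv y y - 2 * dotv x y.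
Proof. by rewrite dotvBl !dotvBr (dotvC y x); ring. Qed.

Lemma dotv0r x : dotv x 0 = 0.
Proof. by rewrite /dotv trmx0 mulmx0 mxE. Qed.

Lemma dotv_suml m (f : 'I_m -> 'rV[R]_n) y :
  dotv (\sum_j f j) y = \sum_j dotv (f j) y.
Proof. by rewrite /dotv mulmx_suml summxE. Qed.

Lemma dotv_sumr m (f : 'I_m -> 'rV[R]_n) y :
  dotv y (\sum_j f j) = \sum_j dotv y (f j).
Proof. by rewrite dotvC dotv_suml; apply: eq_bigr => j _; rewrite dotvC. Qed.

End InnerProduct.

(* Over a real field, W W^T = 0 forces W = 0 (diagonal entries are sums of squares). *)
Lemma mulmx_trmx_eq0 (R : rcfType) p q (W : 'M[R]_(p, q)) : W *m W^T = 0 -> W = 0.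
Proof.
move=> WWt0; apply/matrixP => i j.
have := congr1 (fun M : 'M_p => M i i) WWt0; rewrite !mxE => sum0.
have sq_ge0 l : true -> 0 <= W i l * W^T l i by rewrite mxE -expr2 sqr_ge0.
have := psumr_eq0P sq_ge0 sum0 (erefl true) (i := j).
by rewrite mxE => /eqP; rewrite mulf_eq0 orbb => /eqP.
Qed.

Section OrthogonalProjection.
Context {R : rcfType} {n : nat}.
Variable X : 'M[R]_n.

(* Every z has an orthogonal projection p onto the row space of X:  p lies in
   that space and z - p is orthogonal to every row of X.  The key point is
   that X X^T has the same rank as X. *)
Lemma orth_proj_exists (z : 'rV[R]_n) :
  exists p : 'rV[R]_n, (p <= X)%MS /\ (z - p) *m X^T = 0.
Proof.
have ker_sub : (kermx (X *m X^T) <= kermx X)%MS.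
  apply/sub_kermxP; apply: mulmx_trmx_eq0.
  by rewrite trmx_mul !mulmxA -(mulmxA (kermx _)) mulmx_ker mul0mx.
have sub_XXt : (X^T <= X *m X^T)%MS.
  have [le_rk <-] := mxrank_leqif_sup (submxMl X X^T).
  rewrite eqn_leq le_rk /= mxrank_tr.
  by have := mxrankS ker_sub; rewrite !mxrank_ker leq_sub2lE // rank_leq_row.
have /submxP [a za] : (z *m X^T <= X *m X^T)%MS.
  exact: submx_trans (submxMl _ _) sub_XXt.
exists (a *m X); split; first exact: submxMl.
by rewrite mulmxBl za mulmxA subrr.
Qed.

Lemma dotv_orth {z y : 'rV[R]_n} : z *m X^T = 0 -> (y <= X)%MS -> dotv z y = 0.
Proof. by move=> zX0 /submxP [c ->]; rewrite /dotv trmx_mul mulmxA zX0 mul0mx mxE. Qed.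

End OrthogonalProjection.

Definition is_weight (R : rcfType) (m : nat) (l : 'I_m -> R) : Prop :=
  (forall j, 0 <= l j) /\ \sum_j l j = 1.
Arguments is_weight {R m}.

Definition convex_set (R : rcfType) (n : nat) (C : vset R n) : Prop :=
  forall m (l : 'I_m -> R) (x : 'I_m -> 'rV[R]_n), is_weight l ->
    (forall j, 0 < l j -> C (x j)) -> C (\sum_j l j *: x j).
Arguments convex_set {R n}.

(* C depends only on the projection onto the row space of X, i.e. C is a
   union of translates of the orthogonal complement of that space. *)
Definition proj_invariant (R : rcfType) (n : nat) (X : 'M[R]_n) (C : vset R n) : Prop :=
  forall x y, C x -> (x - y) *m X^T = 0 -> C y.
Arguments proj_invariant {R n}.

Section Helly.
Context {R : rcfType} {n : nat}.
Variable X : 'M[R]_n.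

Lemma affine_dependence {m} (x : 'I_m -> 'rV[R]_n) : ((\rank X).+1 < m)%N ->
  exists a : 'I_m -> R,
    [/\ exists j, a j != 0, \sum_j a j = 0 & (\sum_j a j *: x j) *m X^T = 0].
Proof.
move=> large_m.
pose A := \matrix_j (x j *m X^T); pose M := row_mx A (const_mx 1 : 'M[R]_(m, 1)).
have rank_M : (\rank M <= (\rank X).+1)%N.
  rewrite -mxrank_tr tr_row_mx -addsmxE.
  have [le_adds _] := mxrank_adds_leqif A^T (const_mx 1 : 'M[R]_(m, 1))^T.
  apply: leq_trans le_adds _; rewrite -[(\rank X).+1]addn1.
  apply: leq_add; last exact: rank_leq_row.
  rewrite mxrank_tr -(mxrank_tr X); apply/mxrankS/row_subP => j.
  by rewrite rowK submxMl.
have /rowV0Pn [u /sub_kermxP uM0 u_neq0] : kermx M != 0.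
  by rewrite kermx_eq0 /row_free; apply: contraTN large_m => /eqP <-; rewrite -leqNgt.
move: uM0; rewrite mul_mx_row -row_mx0 => /eq_row_mx [uA0 u10].
exists (fun j => u 0 j); split.
- apply/existsP; apply: contraNT u_neq0 => /existsPn u0.
  by apply/eqP/rowP => j; rewrite mxE; apply/eqP/negPn/u0.
- have := congr1 (fun B : 'M_1 => B 0 0) u10; rewrite !mxE => sum_u.
  by rewrite -[RHS]sum_u; apply: eq_bigr => j _; rewrite ?mxE mulr1.
- rewrite mulmx_suml -[RHS]uA0 mulmx_sum_row; apply: eq_bigr => j _.
  by rewrite rowK scalemxAl.
Qed.

Lemma radon {m} (x : 'I_m -> 'rV[R]_n) : ((\rank X).+1 < m)%N ->
  exists p q : 'I_m -> R,
    [/\ is_weight p, is_weight q,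
        (\sum_j p j *: x j - \sum_j q j *: x j) *m X^T = 0
      & forall j, p j = 0 \/ q j = 0].
Proof.
move=> /(affine_dependence x) [a [[j0 aj0] sum_a0 comb_a0]].
pose pos j := if 0 <= a j then a j else 0.
pose neg j := if 0 <= a j then 0 else - a j.
have pos_ge0 j : 0 <= pos j by rewrite /pos; case: (leP 0 (a j)) => [->|_].
have neg_ge0 j : 0 <= neg j.
  by rewrite /neg; case: (leP 0 (a j)) => [_|/ltW] //; rewrite oppr_ge0.
have pos_neg j : pos j - neg j = a j.
  by rewrite /pos /neg; case: (leP 0 (a j)) => _; rewrite ?subr0 ?sub0r ?opprK.
pose s := \sum_j pos j.
have sum_neg : \sum_j neg j = s.
  apply/eqP; rewrite -subr_eq0 -opprB -sumrB.
  by under eq_bigr do rewrite pos_neg; rewrite sum_a0 oppr0.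
have s_gt0 : 0 < s.
  rewrite lt0r sumr_ge0 // andbT; apply: contra aj0 => /eqP s0.
  have /eqP := pos_neg j0.
  rewrite (psumr_eq0P (fun j _ => pos_ge0 j) s0) //.
  by rewrite (psumr_eq0P (fun j _ => neg_ge0 j) (etrans sum_neg s0)) // subrr eq_sym.
have weight f : (forall j, 0 <= f j) -> \sum_j f j = s -> is_weight (fun j => f j / s).
  move=> f_ge0 sum_f; split=> [j|]; first by rewrite divr_ge0 // ltW.
  by rewrite -mulr_suml sum_f divff // gt_eqF.
exists (fun j => pos j / s), (fun j => neg j / s); split; first exact: weight.
- exact: weight.
- rewrite -sumrB (eq_bigr (fun j => s^-1 *: (a j *: x j))).
    by rewrite -scaler_sumr -scalemxAl comb_a0 scaler0.
  by move=> j _; rewrite -scalerBl scalerA -mulrBl pos_neg mulrC.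
- by move=> j; rewrite /pos /neg; case: (leP 0 (a j)) => _; rewrite mul0r; [right | left].
Qed.

Lemma helly m (C : 'I_m -> vset R n) :
  (forall i, convex_set (C i)) -> (forall i, proj_invariant X (C i)) ->
  (forall S : {set 'I_m}, (#|S| <= (\rank X).+1)%N ->
     exists x, forall i, i \in S -> C i x) ->
  exists x, forall i, C i x.
Proof.
elim: m C => [|m IH] C convC invC small_inter; first by exists 0 => -[].
have [le_m|lt_m] := leqP m.+1 (\rank X).+1.
  have [|x Cx] := small_inter setT; first by rewrite cardsT card_ord.
  by exists x => i; apply: Cx; rewrite in_setT.
have /fin_all_exists [x Cx] j : exists x, forall i, i != j -> C i x.
  have [S' small_S'|x Cx] :=
    IH (fun i => C (lift j i)) (fun i => convC _) (fun i => invC _).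
    have [|x Cx] := small_inter (lift j @: S').
      by rewrite card_imset //; apply: lift_inj.
    by exists x => i iS'; apply: Cx; apply: imset_f.
  exists x => i ij; rewrite eq_sym in ij; have [i' -> _] := unlift_some ij; exact: Cx.
have [p [q [p_w q_w pq0 supp]]] := radon x lt_m.
have comb_in f i : is_weight f -> f i = 0 -> C i (\sum_j f j *: x j).
  move=> f_w fi0; apply: convC => // j fj_gt0; apply: Cx.
  by apply: contraTneq fj_gt0 => <-; rewrite fi0 ltxx.
exists (\sum_j p j *: x j) => i; have [pi0|qi0] := supp i; first exact: comb_in.
by apply: invC (comb_in _ _ q_w qi0) _; rewrite -opprB mulNmx pq0 oppr0.
Qed.

End Helly.

Section Simplex.
Context {R : rcfType} {n : nat}.
Variable v : 'I_n.+1 -> 'rV[R]_n.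
Local Notation T := (simplex_set v).

Lemma simplex_vertex i : T (v i).
Proof.
exists (fun j => (j == i)%:R); split=> [j|]; first exact: ler0n.
split; rewrite (bigD1 i) //= eqxx; first by rewrite big1 ?addr0 // => j /negbTE ->.
by rewrite scale1r big1 ?addr0 // => j /negbTE ->; rewrite scale0r.
Qed.

Lemma simplex_convex m (l : 'I_m -> R) (y : 'I_m -> 'rV[R]_n) :
  is_weight l -> (forall j, T (y j)) -> T (\sum_j l j *: y j).
Proof.
move=> [l_ge0 sum_l] /fin_all_exists [mu mu_y].
exists (fun i => \sum_j l j * mu j i); split=> [i|].
  by apply: sumr_ge0 => j _; apply: mulr_ge0 => //; case: (mu_y j).
split.
  rewrite exchange_big /= -[RHS]sum_l; apply: eq_bigr => j _.
  by rewrite -mulr_sumr; case: (mu_y j) => _ [-> _]; rewrite mulr1.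
rewrite (eq_bigr (fun j => \sum_i (l j * mu j i) *: v i)); last first.
  move=> j _; case: (mu_y j) => _ [_ ->].
  by rewrite scaler_sumr; apply: eq_bigr => i _; rewrite scalerA.
by rewrite exchange_big /=; apply: eq_bigr => i _; rewrite scaler_suml.
Qed.

Lemma simplex_face_point (A : {set 'I_n.+1}) (j0 : 'I_n.+1) (c k : nat) :
  (0 < k)%N -> (#|A| + c)%N = k ->
  T (k%:R^-1 *: (\sum_(m in A) v m + c%:R *: v j0)).
Proof.
move=> k_gt0 card_k.
pose w m : R := (if m \in A then 1 else 0) + (if m == j0 then c%:R else 0).
have w_ge0 m : 0 <= w m by rewrite addr_ge0 //; case: ifP.
have sum_w : \sum_m w m = k%:R.
  rewrite big_split /= -!big_mkcond /= sumr_const big_pred1_eq.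
  by rewrite -card_k natrD.
have sum_wv : \sum_m w m *: v m = \sum_(m in A) v m + c%:R *: v j0.
  rewrite (eq_bigr (fun m => (if m \in A then v m else 0) +
                             (if m == j0 then c%:R *: v m else 0))).
    by rewrite big_split /= -!big_mkcond /= big_pred1_eq.
  by move=> m _; rewrite scalerDl; congr (_ + _); case: ifP; rewrite ?scale1r ?scale0r.
have k_neq0 : k%:R != 0 :> R by rewrite pnatr_eq0 -lt0n.
exists (fun m => k%:R^-1 * w m); split=> [m|].
  by rewrite mulr_ge0 // invr_ge0 ler0n.
split; first by rewrite -mulr_sumr sum_w mulVf.
by rewrite -sum_wv scaler_sumr; apply: eq_bigr => m _; rewrite scalerA.
Qed.

End Simplex.

(* covers_vertex X k v i is the set of translations w for which the projection
   of v i + w onto the row space of X lies in the projection of -k T. *)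
Definition covers_vertex (R : rcfType) (n : nat) (X : 'M[R]_n) (k : nat)
    (v : 'I_n.+1 -> 'rV[R]_n) (i : 'I_n.+1) : vset R n :=
  fun w => exists y, simplex_set v y /\ (k%:R *: y + v i + w) *m X^T = 0.
Arguments covers_vertex {R n}.

Section ProjectedTranslate.
Context {R : rcfType} {n : nat}.
Variables (X : 'M[R]_n) (k : nat) (v : 'I_n.+1 -> 'rV[R]_n).
Local Notation T := (simplex_set v).

Lemma sum_weight_const {m} (l : 'I_m -> R) (z : 'rV[R]_n) :
  is_weight l -> \sum_j l j *: z = z.
Proof. by move=> [_ sum_l]; rewrite -scaler_suml sum_l scale1r. Qed.

Lemma sum_weight_ker {m} (l : 'I_m -> R) (z : 'I_m -> 'rV[R]_n) : is_weight l ->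
  (forall j, 0 < l j -> z j *m X^T = 0) -> (\sum_j l j *: z j) *m X^T = 0.
Proof.
move=> [l_ge0 _] z0; rewrite mulmx_suml big1 // => j _; rewrite -scalemxAl.
have [lj0|lj_gt0] := eqVneq (l j) 0; first by rewrite lj0 scale0r.
by rewrite z0 ?scaler0 // lt0r lj_gt0 l_ge0.
Qed.

Lemma sum_weight_affine {m} (l : 'I_m -> R) (y x : 'I_m -> 'rV[R]_n) b :
  is_weight l ->
  k%:R *: (\sum_j l j *: y j) + b + \sum_j l j *: x j =
  \sum_j l j *: (k%:R *: y j + b + x j).
Proof.
move=> l_w; rewrite -{1}(sum_weight_const l b l_w) scaler_sumr -!big_split /=.
by apply: eq_bigr => j _; rewrite !scalerDr !scalerA mulrC.
Qed.

Lemma covers_vertex_convex i : convex_set (covers_vertex X k v i).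
Proof.
move=> m l x l_w x_cov.
have /fin_all_exists [y y_cov] j : exists y,
    T y /\ (0 < l j -> (k%:R *: y + v i + x j) *m X^T = 0).
  have [/x_cov [y [Ty y0]]|_] := boolP (0 < l j); first by exists y.
  by exists (v ord0); split=> //; exact: simplex_vertex.
exists (\sum_j l j *: y j); split.
  by apply: simplex_convex => // j; case: (y_cov j).
by rewrite sum_weight_affine //; apply: sum_weight_ker => // j; case: (y_cov j).
Qed.

Lemma covers_vertex_invariant i : proj_invariant X (covers_vertex X k v i).
Proof.
move=> w w' [y [Ty y0]] ww'0; exists y; split=> //.
have ww' : w' *m X^T = w *m X^T by apply/eqP; rewrite eq_sym -subr_eq0 -mulmxBl ww'0.
by rewrite mulmxDl ww' -mulmxDl.
Qed.

(* Any k+1 vertices admit a common translation: minus the sum of those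
   vertices, padded with copies of v 0 to k+1 terms. *)
Lemma covers_vertex_small (S : {set 'I_n.+1}) : (0 < k)%N -> (#|S| <= k.+1)%N ->
  exists w, forall i, i \in S -> covers_vertex X k v i w.
Proof.
move=> k_gt0 small_S; pose c := (k.+1 - #|S|)%N.
exists (- (\sum_(m in S) v m + c%:R *: v ord0)) => i iS.
exists (k%:R^-1 *: (\sum_(m in S :\ i) v m + c%:R *: v ord0)); split.
  apply: simplex_face_point => //.
  by move: small_S; rewrite /c (cardsD1 i S) iS; lia.
rewrite scalerA mulfV ?pnatr_eq0 -?lt0n // scale1r (big_setD1 i iS) /=.
by rewrite [v i + _]addrC [in X in _ - X]addrAC subrr mul0mx.
Qed.

Lemma covers_all_vertices : (0 < k)%N -> \rank X = k ->
  exists w, forall i, covers_vertex X k v i w.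
Proof.
move=> k_gt0 rankX; apply: (helly X) => [i|i|S].
- exact: covers_vertex_convex.
- exact: covers_vertex_invariant.
- by rewrite rankX; apply: covers_vertex_small.
Qed.

Lemma proj_translate (w : 'rV[R]_n) : (forall i, covers_vertex X k v i w) ->
  contains_translate (proj_set X (scale_set k%:R (scale_set (-1) T))) (proj_set X T).
Proof.
move=> /fin_all_exists [y y_cov].
have [p0 [p0X w_p0]] := orth_proj_exists X w.
exists p0 => p [x [[l [l_ge0 [sum_l ->]]] [pX x_p]]].
have l_w : is_weight l by [].
exists (k%:R *: (-1 *: \sum_i l i *: y i)); split.
  exists (-1 *: \sum_i l i *: y i); split=> //; exists (\sum_i l i *: y i); split=> //.
  by apply: simplex_convex => // i; case: (y_cov i).
split=> [|z zX]; first exact: addmx_sub.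
have cov0 : (k%:R *: (\sum_i l i *: y i) + w + \sum_i l i *: v i) *m X^T = 0.
  rewrite sum_weight_affine //; apply: sum_weight_ker => // i _.
  by case: (y_cov i) => _; rewrite addrAC.
have := dotv_orth X cov0 zX; have := dotv_orth X w_p0 zX; have := x_p z zX.
rewrite !dotvBl !dotvDl !dotvZl; lra.
Qed.

End ProjectedTranslate.

Section RegularSimplex.
Context {R : rcfType} {n : nat}.
Variables (v : 'I_n.+1 -> 'rV[R]_n) (s : R).
Hypotheses (n_gt0 : (0 < n)%N) (s_gt0 : 0 < s)
  (v_reg : forall i j, i != j -> dotv (v i - v j) (v i - v j) = s).
Local Notation T := (simplex_set v).

Let N : R := n.+1%:R.
Let N_gt0 : 0 < N. Proof. by rewrite ltr0n. Qed.
Let N_def : N = n%:R + 1. Proof. by rewrite /N -natr1. Qed.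

(* The centroid g, the vertices u i centred at g, and the squared
   circumradius rho of the simplex. *)
Let g : 'rV[R]_n := N^-1 *: \sum_j v j.
Let u i : 'rV[R]_n := v i - g.
Let rho : R := n%:R * s / (2 * N).
Local Notation D i j := (dotv (u i) (u j)).
Let rho_gt0 : 0 < rho.
Proof. by rewrite /rho divr_gt0 ?mulr_gt0 // ltr0n. Qed.

Lemma sum_centred z : \sum_i dotv z (u i) = 0.
Proof.
rewrite -dotv_sumr sumrB sumr_const card_ord -scaler_nat scalerA -/N mulfV ?gt_eqF //.
by rewrite scale1r subrr dotv0r.
Qed.

Lemma centred_gram i j : D i j = if j == i then rho else - (rho / n%:R).
Proof.
have dist i' j' : D i' i' + D j' j' - 2 * D i' j' = if j' == i' then 0 else s.
  case: eqP => [->|/eqP ji]; first by ring.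
  have ij : i' != j' by rewrite eq_sym.
  rewrite -(v_reg _ _ ij) (_ : v i' - v j' = u i' - u j'); last first.
    by rewrite /u opprB addrA subrK.
  by rewrite (dotv_normB (u i') (u j')).
pose A := \sum_k D k k.
have diag i' : D i' i' = (n%:R * s - A) / N.
  have sum_dist : \sum_j' (D i' i' + D j' j' - 2 * D i' j') =
                  \sum_j' (if j' == i' then 0 else s).
    by apply: eq_bigr => j' _; exact: dist.
  rewrite [RHS](eq_bigr (fun j' => s - if j' == i' then s else 0)) in sum_dist; last first.
    by move=> j' _; case: eqP; rewrite ?subrr ?subr0.
  rewrite [RHS]sumrB -big_mkcond big_pred1_eq sumr_const card_ord mulrSr addrK in sum_dist.
  rewrite sumrB big_split /= sumr_const card_ord -/A -mulr_sumr in sum_dist.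
  rewrite (sum_centred (u i')) mulr0 subr0 in sum_dist.
  rewrite -[D _ _ *+ _]mulr_natl -[s *+ _]mulr_natl -/N in sum_dist.
  by rewrite -sum_dist addrK mulrAC mulfV ?mul1r // gt_eqF.
have A_half : A = n%:R * s / 2.
  have : A = n%:R * s - A.
    rewrite {1}/A (eq_bigr _ (fun k _ => diag k)) sumr_const card_ord -[_ *+ _]mulr_natr.
    by rewrite -/N divfK // gt_eqF.
  by move/(congr1 (+%R^~ A)); rewrite /= subrK => <-; field.
have rho_diag : D i i = rho.
  by rewrite diag A_half /rho; field; rewrite addrC natr1 pnatr_eq0.
case: eqP => [->|/eqP ji]; first exact: rho_diag.
have := dist i j; rewrite (negbTE ji) (diag j) -(diag i) rho_diag => dist_ij.
have -> : D i j = rho - s / 2 by rewrite -dist_ij; field.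
by rewrite /rho N_def; field; rewrite natr1 !pnatr_eq0 -lt0n n_gt0.
Qed.

(* Every point of the simplex sees each centred vertex at inner product at
   least -rho/n: the minimum of a linear function is attained at a vertex. *)
Lemma simplex_dot_lower y i : T y -> - (rho / n%:R) <= dotv (y - g) (u i).
Proof.
move=> [mu [mu_ge0 [sum_mu ->]]].
have -> : \sum_j mu j *: v j - g = \sum_j mu j *: u j.
  rewrite /u (eq_bigr _ (fun j _ => scalerBr (mu j) (v j) g)) sumrB.
  by rewrite -scaler_suml sum_mu scale1r.
rewrite dotv_suml -[X in X <= _]mul1r -{1}sum_mu mulr_suml.
apply: ler_sum => j _; rewrite dotvZl ler_wpM2l // centred_gram.
case: eqP => _; last exact: lexx.
by apply: (le_trans _ (ltW rho_gt0)); rewrite oppr_le0 divr_ge0 ?ler0n ?ltW.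
Qed.

(* If every vertex v i, translated by w, lies in -lam T, then lam >= n:
   pair v i + w with u i, use simplex_dot_lower and sum over i. *)
Lemma reflected_vertices_bound (lam : R) (w : 'rV[R]_n) : 0 <= lam ->
  (forall i, exists y, T y /\ v i + w = - lam *: y) -> n%:R <= lam.
Proof.
move=> lam_ge0 refl; pose z := (1 + lam) *: g + w.
have vertex_bound i : rho + dotv z (u i) <= lam * (rho / n%:R).
  have [y [Ty vwy]] := refl i.
  have dv : dotv (v i) (u i) = rho + dotv g (u i).
    by have := centred_gram i i; rewrite eqxx => <-; rewrite -dotvDl subrK.
  have dy : dotv y (u i) = dotv (y - g) (u i) + dotv g (u i).
    by rewrite -dotvDl subrK.
  have := congr1 (fun x => dotv x (u i)) vwy.
  rewrite /= [dotv (v i + w) _]dotvDl [dotv (- lam *: y) _]dotvZl dv dy.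
  have := ler_wpM2l lam_ge0 (simplex_dot_lower _ i Ty).
  rewrite /z [dotv (_ + w) _]dotvDl [dotv ((1 + lam) *: g) _]dotvZl.
  set G := dotv g (u i); set W := dotv w (u i); set Y := dotv (y - g) (u i).
  move=> lower vertex_eq; lra.
have sum_bound : \sum_i (rho + dotv z (u i)) <= \sum_(i < n.+1) lam * (rho / n%:R).
  by apply: ler_sum => i _; exact: vertex_bound.
move: sum_bound; rewrite big_split /= sum_centred addr0 !sumr_const card_ord.
rewrite ler_pMn2r // mulrA ler_pdivlMr ?ltr0n // [lam * _]mulrC ler_pM2l //.
Qed.

End RegularSimplex.

Lemma reflected_translate_bound {R : rcfType} {n k : nat} {v : 'I_n.+1 -> 'rV[R]_n}
    {c : R} : (0 < n)%N -> regular_vertices v -> 0 < c ->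
  contains_translate (scale_set c (scale_set k%:R (scale_set (-1) (simplex_set v))))
    (simplex_set v) ->
  n%:R <= c * k%:R.
Proof.
move=> n_gt0 [s [s_gt0 v_reg]] c_gt0 [w transl].
apply: (reflected_vertices_bound v s n_gt0 s_gt0 v_reg _ w) => [|i].
  by rewrite mulr_ge0 ?ler0n // ltW.
have [_ [[_ [[y [Ty ->]] ->]] ->]] := transl _ (simplex_vertex v i).
by exists y; split=> //; rewrite !scalerA mulrN1.
Qed.

Theorem mainTheorem9 (R : rcfType) (n d : nat) (v : 'I_n.+1 -> 'rV[R]_n) :
  (2 <= n)%N -> (1 <= d <= n - 1)%N -> regular_vertices v ->
  let T := simplex_set v in
  let L := scale_set ((n - d)%N)%:R (scale_set (-1) T) in
  (forall X : 'M[R]_n, \rank X = (n - d)%N ->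
      contains_translate (proj_set X L) (proj_set X T)) /\
  (forall c : R, 0 < c -> c < n%:R / ((n - d)%N)%:R ->
      ~ contains_translate (scale_set c L) T).
Proof.
move=> n_ge2 d_range v_reg T L.
have k_gt0 : (0 < n - d)%N by lia.
split=> [X rankX | c c_gt0 c_lt transl].
  have [w w_cov] := covers_all_vertices X (n - d) v k_gt0 rankX.
  exact: proj_translate w_cov.
have := reflected_translate_bound (ltnW n_ge2) v_reg c_gt0 transl.
by rewrite leNgt -ltr_pdivlMr ?ltr0n // c_lt.
Qed.
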